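(* Let $n\ge 3$ be odd and let $D_{2n}$ be the dihedral group of order $2n$. Then $\Gamma_{D_{2n},H}$ admits a perfect code for every normal subgroup $H$ of $D_{2n}$.
   Context: For a normal subgroup $H$ of a finite group $G$ with identity $e$, the subgroup sum graph $\Gamma_{G,H}$ is the simple undirected graph with vertex set $G$ in which distinct vertices $x,y$ are adjacent if and only if $xy\in H\setminus\{e\}$. A perfect code in a graph is a set $C$ of vertices that is independent and such that every vertex not in $C$ is adjacent to exactly one vertex of $C$. *)

From HB Require Import structures.
From mathcomp Require Import all_boot fingroup extremal.
Set Implicit Arguments.
Unset Strict Implicit.
Unset Printing Implicit Defensive.
Local Open Scope group_scope.

(* Subgroup sum graph Gamma_{G,H} on the vertex set of the (full) group gT:
   distinct x, y are adjacent iff x * y \in H \ {1}. *)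
Definition ssg_adj (gT : finGroupType) (H : {set gT}) : rel gT :=
  fun x y => (x != y) && (x * y \in H :\ 1).

Definition perfect_code (T : finType) (e : rel T) (C : {set T}) : Prop :=
  (forall x y, x \in C -> y \in C -> x != y -> ~~ e x y) /\
  (forall v, v \notin C -> #|[set c in C | e v c]| = 1%N).

Definition has_perfect_code (T : finType) (e : rel T) : Prop :=
  exists C : {set T}, perfect_code e C.

From HB Require Import structures.
From mathcomp Require Import all_boot fingroup morphism quotient cyclic.
From mathcomp Require Import presentation extremal.
Set Implicit Arguments.
Unset Strict Implicit.
Unset Printing Implicit Defensive.
Local Open Scope group_scope.

(* Let q : G -> G/H.  Adjacent vertices x, y satisfy q y = (q x)^-1, so the
   vertex set splits into blocks q^-1 {c, c^-1} (c in G/H) with no edges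
   between blocks.  Pick a representative a of each block, a = 1 for the
   block H, and take {a, a^-1} as codewords.  A non-codeword v of the block is
   adjacent to the codeword t in {a, a^-1} with q t = (q v)^-1; it is unique
   unless q a is self-inverse, i.e. a^2 is in H.  So it suffices that a^2 in H
   forces a^2 = 1 or a in H.  In D_2n with n odd every element is a reflection
   or has odd order, and an element of odd order lies in the cyclic group
   generated by its square. *)

Definition inv_pair (gT : finGroupType) (a : gT) : {set gT} := [set a; a^-1].

Lemma inv_pairV (gT : finGroupType) (a : gT) : inv_pair a^-1 = inv_pair a.
Proof. by rewrite /inv_pair invgK setUC. Qed.

Lemma eq_inv_pair (gT : finGroupType) (a b : gT) :
  (inv_pair a == inv_pair b) = (a \in inv_pair b).
Proof.
apply/eqP/idP => [<- | ]; first exact: set21.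
by case/set2P => ->; rewrite ?inv_pairV.
Qed.

Lemma memV_inv_pair (gT : finGroupType) (a x : gT) :
  (x^-1 \in inv_pair a) = (x \in inv_pair a).
Proof. by rewrite !inE eqg_inv eqg_invLR orbC. Qed.

Section SubgroupSumGraph.

Variables (gT : finGroupType) (H : {group gT}).
Hypothesis nsHG : H <| [set: gT].

Local Notation q := (coset H).

Lemma mem_norm_normal x : x \in 'N(H).
Proof. by rewrite (subsetP (normal_norm nsHG)) ?inE. Qed.

Lemma cosetM x y : q (x * y) = q x * q y.
Proof. exact: morphM (mem_norm_normal x) (mem_norm_normal y). Qed.

Lemma cosetV x : q x^-1 = (q x)^-1.
Proof. exact: morphV (mem_norm_normal x). Qed.

Lemma coset_eq1 x : (q x == 1) = (x \in H).
Proof.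
by apply/eqP/idP => [/(coset_idr (mem_norm_normal x)) | /coset_id].
Qed.

Lemma ssg_adjE x y : ssg_adj H x y = [&& x != y, x * y != 1 & q y == (q x)^-1].
Proof. by rewrite /ssg_adj !inE -coset_eq1 cosetM [q y == _]eq_sym eq_invg_mul. Qed.

(* Vertices with the same key form the blocks q^-1 {c, c^-1}. *)
Definition pair_key x : {set coset_of H} := inv_pair (q x).

Lemma pair_keyV x : pair_key x^-1 = pair_key x.
Proof. by rewrite /pair_key cosetV inv_pairV. Qed.

Lemma eq_pair_key x y : (pair_key y == pair_key x) = (q y \in inv_pair (q x)).
Proof. exact: eq_inv_pair. Qed.

Definition pair_rep (k : {set coset_of H}) : gT :=
  if k == pair_key 1 then 1 else odflt 1 [pick w | pair_key w == k].

Lemma pair_key_rep x : pair_key (pair_rep (pair_key x)) = pair_key x.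
Proof.
rewrite /pair_rep; case: eqP => [-> // | _].
by case: pickP => [w /eqP // | /(_ x)]; rewrite eqxx.
Qed.

Lemma pair_rep_normal x : x \in H -> pair_rep (pair_key x) = 1.
Proof.
by move=> Hx; rewrite /pair_rep /pair_key (coset_id Hx) coset_id ?eqxx.
Qed.

Definition pair_code : {set gT} := [set y | y \in inv_pair (pair_rep (pair_key y))].

Lemma mem_pair_code x y : pair_key y = pair_key x ->
  (y \in pair_code) = (y \in inv_pair (pair_rep (pair_key x))).
Proof. by rewrite inE => ->. Qed.

Lemma pair_code_independent x y :
  x \in pair_code -> y \in pair_code -> x != y -> ~~ ssg_adj H x y.
Proof.
move=> Cx Cy neq_xy; rewrite ssg_adjE neq_xy /=; apply/nandP.
case: (boolP (q y == (q x)^-1)) => [qyx | _]; last by right.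
have key_y : pair_key y = pair_key x.
  by apply/eqP; rewrite eq_pair_key (eqP qyx) set22.
rewrite (mem_pair_code key_y) in Cy; rewrite (mem_pair_code (erefl _)) in Cx.
left; rewrite negbK; move: neq_xy.
by case/set2P: Cx => ->; case/set2P: Cy => ->; rewrite ?eqxx ?mulgV ?mulVg.
Qed.

Hypothesis sqr_mem : forall a, a ^+ 2 \in H -> a ^+ 2 = 1 \/ a \in H.

Lemma pair_rep_invg x (a := pair_rep (pair_key x)) : q a = (q a)^-1 -> a^-1 = a.
Proof.
move=> qa_inv; have a2H : a ^+ 2 \in H.
  by rewrite -coset_eq1 expg2 cosetM -eq_invg_mul -qa_inv.
case: (sqr_mem a2H) => [a2 | Ha]; first by apply/eqP; rewrite eq_invg_mul -expg2 a2.
have key_x : pair_key x = pair_key 1.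
  by rewrite -pair_key_rep /a /pair_key (coset_id Ha) coset_id.
by rewrite /a key_x pair_rep_normal ?invg1.
Qed.

Lemma pair_code_neighbour v :
  v \notin pair_code -> #|[set c in pair_code | ssg_adj H v c]| = 1%N.
Proof.
move=> Cv; set a := pair_rep (pair_key v).
have key_a : pair_key a = pair_key v := pair_key_rep v.
pose t := if q a == (q v)^-1 then a else a^-1.
have qt : q t = (q v)^-1.
  rewrite /t; case: eqP => // qa_v; rewrite cosetV.
  by move/eqP: key_a; rewrite eq_pair_key => /set2P[-> // | ].
have key_t : pair_key t = pair_key v by rewrite /t; case: ifP; rewrite ?pair_keyV.
have t_pair : t \in inv_pair a by rewrite /t; case: ifP; rewrite !inE eqxx ?orbT.
have Ct : t \in pair_code by rewrite (mem_pair_code key_t).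
suff -> : [set c in pair_code | ssg_adj H v c] = [set t] by rewrite cards1.
apply/setP => w; rewrite in_set ssg_adjE in_set1; apply/idP/eqP => [| ->].
  case/and4P => Cw _ _ /eqP qw.
  have key_w : pair_key w = pair_key v.
    by apply/eqP; rewrite eq_pair_key qw set22.
  rewrite (mem_pair_code key_w) -/a in Cw.
  case/set2P: Cw qw => -> qw; rewrite /t; first by rewrite qw eqxx.
  case: eqP => // qa; apply: pair_rep_invg.
  by rewrite {1}qa -qw cosetV.
rewrite Ct qt eqxx andbT /=; apply/andP; split; apply: contraNneq Cv; first by move->.
move/eqP; rewrite -eq_invg_mul eqg_invLR => /eqP ->.
by rewrite -pair_keyV in key_t; rewrite (mem_pair_code key_t) memV_inv_pair.
Qed.

Lemma ssg_has_perfect_code : has_perfect_code (ssg_adj H).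
Proof.
by exists pair_code; split; [exact: pair_code_independent | exact: pair_code_neighbour].
Qed.

End SubgroupSumGraph.

Lemma mem_cycle_sqr (gT : finGroupType) (a : gT) : odd #[a] -> a \in <[a ^+ 2]>.
Proof. by rewrite -coprimen2 -generator_coprime => /eqP <-; apply: cycle_id. Qed.

Lemma dihedral_sqr1_or_odd_order n (a : 'D_(n.*2)) :
  1 < n -> odd n -> a ^+ 2 = 1 \/ odd #[a].
Proof.
move=> n_gt1 odd_n; have := isoGrp_hom (Grp_dihedral n_gt1).
case/existsP=> -[x y] /= /eqP[defD xn y2 xy].
have nxy : y \in 'N(<[x]>) by rewrite inE -cycleJ xy cycleV.
have : a \in <[x]> * <[y]> by rewrite -norm_joinEr ?cycle_subG // defD inE.
case/mulsgP=> _ _ /cycleP[i ->] /cycleP[j ->] ->{a}.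
rewrite -(expg_mod _ y2) modn2; case: (odd j); last first.
  right; apply: dvdn_odd odd_n.
  by rewrite order_dvdn mulg1 -expgM mulnC expgM xn expg1n.
left; have yV : y^-1 = y by apply/eqP; rewrite eq_invg_mul -expg2 y2.
by rewrite expg1 expg2 -{1}yV -mulgA -conjgE conjXg xy expgVn mulgV.
Qed.

Theorem proposition4p2 (n : nat) (Hn3 : 3 <= n) (Hodd : odd n)
  (H : {group 'D_(n.*2)}) (HnG : (H <| [set: 'D_(n.*2)])%g) :
  has_perfect_code (ssg_adj H).
Proof.
apply: ssg_has_perfect_code HnG _ => a a2H.
have [a2 | odd_a] := dihedral_sqr1_or_odd_order a (ltnW Hn3) Hodd; first by left.
by right; apply: subsetP (mem_cycle_sqr odd_a); rewrite cycle_subG.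
Qed.
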